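(* Let $(E,\mu)$ and $(F,\nu)$ be fuzzy Riesz spaces and $T:E\rightarrow F$ a fuzzy Riesz homomorphism. (1) If $B$ is a fuzzy ideal in $E$, then $T(B)$ is a fuzzy ideal in $T(E)$. (2) If $B_1$ and $B_2$ are fuzzy ideals in $E$, then $T(B_1\cap B_2)=T(B_1)\cap T(B_2)$.
   Context: A fuzzy order on a real vector space $E$ is a map $\mu:E\times E\to[0,1]$ with $\mu(x,x)=1$; $\mu(x,y)+\mu(y,x)>1$ implies $x=y$; and $\mu(x,z)\ge\sup_{y}\min(\mu(x,y),\mu(y,z))$. Write $x\le y$ for $\mu(x,y)>\frac12$; suprema/infima are taken with respect to this relation. $(E,\mu)$ is a fuzzy ordered linear space if $\mu(x_1,x_2)>\frac12$ implies $\mu(x_1,x_2)\le\mu(x_1+x,x_2+x)$ for all $x$ and $\mu(x_1,x_2)\le\mu(\alpha x_1,\alpha x_2)$ for all $\alpha>0$; it is a fuzzy Riesz space if $x\vee y=\sup\{x,y\}$ and $x\wedge y=\inf\{x,y\}$ exist for all $x,y$. $|x|=x\vee(-x)$. A fuzzy Riesz homomorphism is a linear map with $T(x\vee y)=Tx\vee Ty$; its range $T(E)$ is a fuzzy Riesz subspace of $F$ and is regarded as a fuzzy Riesz space with the restricted fuzzy order. A subset $A$ is fuzzy solid if $\mu(|x|,|y|)>\frac12$ and $y\in A$ imply $x\in A$; a fuzzy ideal is a fuzzy solid vector subspace. *)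

From HB Require Import structures.
From mathcomp Require Import all_boot all_order all_algebra.
From mathcomp Require Import classical_sets reals.
Set Implicit Arguments. Unset Strict Implicit. Unset Printing Implicit Defensive.
Import Order.TTheory GRing.Theory Num.Theory.
Local Open Scope ring_scope.
Local Open Scope classical_set_scope.

Section FuzzyRiesz.
Variable R : realType.

(* A fuzzy order on V: values in [0,1], reflexive (=1), antisymmetric,
   max-min transitive  mu x z >= sup_y min (mu x y) (mu y z), written
   equivalently as: mu x z is an upper bound of all min (mu x y) (mu y z). *)
Definition fuzzy_order (V : Type) (mu : V -> V -> R) : Prop :=
  [/\ (forall x y, 0 <= mu x y <= 1),
      (forall x, mu x x = 1),
      (forall x y, mu x y + mu y x > 1 -> x = y) &
      (forall x y z, Num.min (mu x y) (mu y z) <= mu x z)].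

Definition fle (V : Type) (mu : V -> V -> R) (x y : V) : Prop := mu x y > 2^-1.

Definition is_sup_in (V : Type) (S : set V) (mu : V -> V -> R) (A : set V) (s : V) :=
  [/\ S s, (forall a, A a -> fle mu a s) &
      (forall u, S u -> (forall a, A a -> fle mu a u) -> fle mu s u)].

Definition is_inf_in (V : Type) (S : set V) (mu : V -> V -> R) (A : set V) (s : V) :=
  [/\ S s, (forall a, A a -> fle mu s a) &
      (forall u, S u -> (forall a, A a -> fle mu u a) -> fle mu u s)].

Definition is_sup (V : Type) := @is_sup_in V setT.
Definition is_inf (V : Type) := @is_inf_in V setT.

Definition fuzzy_ordered_linear_space (V : lmodType R) (mu : V -> V -> R) : Prop :=
  [/\ fuzzy_order mu,
      (forall x1 x2 x, fle mu x1 x2 -> mu x1 x2 <= mu (x1 + x) (x2 + x)) &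
      (forall x1 x2 (a : R), 0 < a -> fle mu x1 x2 -> mu x1 x2 <= mu (a *: x1) (a *: x2))].

Definition fuzzy_riesz_space (V : lmodType R) (mu : V -> V -> R) : Prop :=
  [/\ fuzzy_ordered_linear_space mu,
      (forall x y : V, exists s, is_sup mu [set x; y] s) &
      (forall x y : V, exists s, is_inf mu [set x; y] s)].

(* T (x \/ y) = T x \/ T y, stated relationally: whenever s = x \/ y in E,
   T s = T x \/ T y in F. *)
Definition fuzzy_riesz_hom (E F : lmodType R) (mu : E -> E -> R) (nu : F -> F -> R)
  (T : {linear E -> F}) : Prop :=
  forall x y s, is_sup mu [set x; y] s -> is_sup nu [set T x; T y] (T s).

Definition is_abs_in (V : lmodType R) (S : set V) (mu : V -> V -> R) (x a : V) :=
  is_sup_in S mu [set x; - x] a.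

Definition fuzzy_ideal_in (V : lmodType R) (S : set V) (mu : V -> V -> R) (B : set V) :=
  [/\ B `<=` S,
      B 0,
      (forall x y, B x -> B y -> B (x + y)),
      (forall (c : R) x, B x -> B (c *: x)) &
      (forall x y a b, S x -> S y -> is_abs_in S mu x a -> is_abs_in S mu y b ->
          fle mu a b -> B y -> B x)].

Definition fuzzy_ideal (V : lmodType R) (mu : V -> V -> R) (B : set V) :=
  fuzzy_ideal_in setT mu B.

End FuzzyRiesz.

From HB Require Import structures.
From mathcomp Require Import all_boot all_order all_algebra.
From mathcomp Require Import classical_sets reals.
From mathcomp Require Import lra.
Set Implicit Arguments. Unset Strict Implicit.
Import Order.TTheory GRing.Theory Num.Theory.
Local Open Scope ring_scope.
Local Open Scope classical_set_scope.

(* A fuzzy Riesz homomorphism T lifts order intervals: if -Tc <= Tu <= Tc with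
   c >= 0, then z = (u \/ -c) /\ c satisfies Tz = Tu and -c <= z <= c, and z
   stays in every interval [-d, d] that contains u.  With c = |w| for w in B
   this turns a solid bound in T(E) into one in E, whence T(B) is solid; with
   c = |u2| and d = |u1| when Tu1 = Tu2 and ui in Bi, it gives a common
   preimage in B1 and B2. *)

Section FuzzyOrderedSpace.
Variables (R : realType) (V : lmodType R) (mu : V -> V -> R).
Hypothesis HV : fuzzy_ordered_linear_space mu.

Lemma fle_refl x : fle mu x x.
Proof. by case: HV => -[_ mu_refl _ _] _ _; rewrite /fle mu_refl; lra. Qed.

Lemma fle_trans x y z : fle mu x y -> fle mu y z -> fle mu x z.
Proof.
case: HV => -[_ _ _ mu_trans] _ _; rewrite /fle => lexy leyz.
by apply: lt_le_trans (mu_trans x y z); rewrite lt_min lexy leyz.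
Qed.

Lemma fle_anti x y : fle mu x y -> fle mu y x -> x = y.
Proof.
by case: HV => -[_ _ mu_anti _] _ _; rewrite /fle => *; apply: mu_anti; lra.
Qed.

Lemma fle_translate x y x' y' : fle mu x y -> y' - x' = y - x -> fle mu x' y'.
Proof.
case: HV => _ mu_add _ lexy eq_diff.
have := lt_le_trans lexy (mu_add x y (x' - x) lexy).
have -> : x + (x' - x) = x' by rewrite addrC subrK.
by have -> : y + (x' - x) = y' by rewrite -[y'](subrK x') eq_diff addrA addrAC.
Qed.

Lemma fleN2 x y : fle mu x y -> fle mu (- y) (- x).
Proof. by move=> lexy; apply: (fle_translate lexy); rewrite opprK addrC. Qed.

Lemma fleNl x y : fle mu (- x) y -> fle mu (- y) x.
Proof. by move/fleN2; rewrite opprK. Qed.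

Lemma fle0N x : fle mu 0 x -> fle mu (- x) 0.
Proof. by move/fleN2; rewrite oppr0. Qed.

Lemma bound_ge0 x a : fle mu x a -> fle mu (- x) a -> fle mu 0 a.
Proof.
case: HV => _ _ mu_scale lexa leNxa.
have le0ax : fle mu 0 (a + x) by apply: (fle_translate leNxa); rewrite subr0 opprK.
have leaxaa : fle mu (a + x) (a + a).
  by apply: (fle_translate lexa); rewrite opprD addrA addrK.
have half_gt0 : (0 : R) < 2^-1 by rewrite invr_gt0 ltr0n.
have le0aa := fle_trans le0ax leaxaa.
have := lt_le_trans le0aa (mu_scale _ _ _ half_gt0 le0aa).
by rewrite scaler0 -mulr2n -scaler_nat scalerA mulVf ?scale1r ?pnatr_eq0.
Qed.

Lemma sup2_ub x y s : is_sup mu [set x; y] s -> fle mu x s /\ fle mu y s.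
Proof. by case=> _ ub _; split; apply: ub; [left | right]. Qed.

Lemma sup2_least x y s d :
  is_sup mu [set x; y] s -> fle mu x d -> fle mu y d -> fle mu s d.
Proof. by case=> _ _ least lexd leyd; apply: least => // _ [->|->]. Qed.

Lemma sup2_eq_l x y s : is_sup mu [set x; y] s -> fle mu y x -> s = x.
Proof.
move=> sup_s leyx; apply: fle_anti; last exact: (sup2_ub sup_s).1.
exact: (sup2_least sup_s (fle_refl x) leyx).
Qed.

Lemma sup2_eq_r x y s : is_sup mu [set x; y] s -> fle mu x y -> s = y.
Proof.
move=> sup_s lexy; apply: fle_anti; last exact: (sup2_ub sup_s).2.
exact: (sup2_least sup_s lexy (fle_refl y)).
Qed.

Lemma inf2_lb x y s : is_inf mu [set x; y] s -> fle mu s x /\ fle mu s y.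
Proof. by case=> _ lb _; split; apply: lb; [left | right]. Qed.

Lemma inf2_greatest x y s d :
  is_inf mu [set x; y] s -> fle mu d x -> fle mu d y -> fle mu d s.
Proof. by case=> _ _ greatest ledx ledy; apply: greatest => // _ [->|->]. Qed.

Lemma inf2_of_sup2 x y s :
  is_sup mu [set x; y] s -> is_inf mu [set x; y] (x + y - s).
Proof.
move=> sup_s; have [lexs leys] := sup2_ub sup_s; split=> //.
  move=> _ [->|->].
    by apply: (fle_translate leys); rewrite opprB addrA [x + s]addrC addrKA.
  apply: (fle_translate lexs).
  by rewrite [x + y]addrC opprB addrA [y + s]addrC addrKA.
move=> d _ lbd.
have ledx := lbd x (or_introl erefl); have ledy := lbd y (or_intror erefl).
have : fle mu s (x + y - d).
  apply: (sup2_least sup_s).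
    by apply: (fle_translate ledy); rewrite addrAC [x + y]addrC addrK.
  by apply: (fle_translate ledx); rewrite addrAC addrK.
by move/fle_translate; apply; rewrite addrAC.
Qed.

Lemma abs_ge0 x a : is_sup mu [set x; - x] a -> fle mu 0 a.
Proof. by move=> /sup2_ub[]; apply: bound_ge0. Qed.

Lemma abs_le x a d : is_sup mu [set x; - x] a -> fle mu (- d) x -> fle mu x d ->
  fle mu a d.
Proof. by move=> abs_a /fleNl leNxd lexd; apply: sup2_least abs_a lexd leNxd. Qed.

End FuzzyOrderedSpace.

Lemma ideal_abs_bounded (R : realType) (V : lmodType R) (mu : V -> V -> R)
    (B : set V) w c z :
  fuzzy_riesz_space mu -> fuzzy_ideal mu B -> B w -> is_sup mu [set w; - w] c ->
  fle mu (- c) z -> fle mu z c -> B z.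
Proof.
case=> HV has_sup _ [_ _ _ _ solid] Bw abs_c leNcz lezc.
have [a abs_a] := has_sup z (- z).
exact: (solid z w a c I I abs_a abs_c (abs_le HV abs_a leNcz lezc) Bw).
Qed.

Section FuzzyRieszHom.
Variables (R : realType) (E F : lmodType R).
Variables (mu : E -> E -> R) (nu : F -> F -> R) (T : {linear E -> F}).
Hypotheses (rE : fuzzy_riesz_space mu) (rF : fuzzy_riesz_space nu).
Hypothesis hom_T : fuzzy_riesz_hom mu nu T.

Let HE : fuzzy_ordered_linear_space mu. Proof. by case: rE. Qed.
Let HF : fuzzy_ordered_linear_space nu. Proof. by case: rF. Qed.

Lemma riesz_hom_abs w c :
  is_sup mu [set w; - w] c -> is_sup nu [set T w; - T w] (T c).
Proof. by move/hom_T; rewrite raddfN. Qed.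

Lemma riesz_hom_lift_interval u c :
  fle mu 0 c -> fle nu (- T c) (T u) -> fle nu (T u) (T c) ->
  exists z, [/\ T z = T u, fle mu (- c) z, fle mu z c &
    forall d, fle mu (- d) u -> fle mu u d -> fle mu (- d) z /\ fle mu z d].
Proof.
move=> le0c leNTcTu leTuTc; case: rE => _ has_sup _.
have leNc0 := fle0N HE le0c.
have [p sup_p] := has_sup u (- c).
have [q sup_q] := has_sup p c.
have inf_z := inf2_of_sup2 HE sup_q.
have [lezp lezc] := inf2_lb inf_z.
have [leup leNcp] := sup2_ub sup_p.
have Tp : T p = T u.
  by apply: (sup2_eq_l HF _ leNTcTu); rewrite -raddfN; apply: hom_T.
have Tq : T q = T c.
  by apply: (sup2_eq_r HF _ leTuTc); rewrite -Tp; apply: hom_T.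
exists (p + c - q); split=> //.
- have -> : T (p + c - q) = T p + T c - T q by rewrite raddfB raddfD.
  by rewrite Tp Tq addrK.
- exact: (inf2_greatest inf_z leNcp (fle_trans HE leNc0 le0c)).
move=> d leNdu leud; have le0d := bound_ge0 HE leud (fleNl HE leNdu).
split.
  apply: (inf2_greatest inf_z (fle_trans HE leNdu leup)).
  exact: (fle_trans HE (fle0N HE le0d) le0c).
apply: (fle_trans HE lezp _); apply: (sup2_least sup_p leud).
exact: (fle_trans HE leNc0 le0d).
Qed.

Lemma riesz_hom_image_ideal B :
  fuzzy_ideal mu B -> fuzzy_ideal_in (range T) nu (T @` B).
Proof.
move=> idealB; have [_ B0 BD BZ _] := idealB; split.
- by move=> _ [w _ <-]; exists w.
- by exists 0; rewrite ?raddf0.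
- by move=> _ _ [x Bx <-] [y By <-]; exists (x + y); rewrite ?raddfD //; apply: BD.
- by move=> k _ [x Bx <-]; exists (k *: x); rewrite ?linearZ //; apply: BZ.
move=> _ y a b [u _ <-] _ [_ ub_a _] [_ _ least_b] leab [w Bw Twy]; subst y.
have [_ has_sup _] := rE; have [c abs_c] := has_sup w (- w).
have [leTwTc leNTwTc] := sup2_ub (riesz_hom_abs abs_c).
have lebTc : fle nu b (T c).
  by apply: least_b; [exists c | move=> _ [->|->]].
have leaTc := fle_trans HF leab lebTc.
have leTuTc := fle_trans HF (ub_a _ (or_introl erefl)) leaTc.
have leNTcTu := fleNl HF (fle_trans HF (ub_a _ (or_intror erefl)) leaTc).
have [z [Tz leNcz lezc _]] :=
  riesz_hom_lift_interval (abs_ge0 HE abs_c) leNTcTu leTuTc.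
by exists z; first exact: (ideal_abs_bounded rE idealB Bw abs_c leNcz lezc).
Qed.

Lemma riesz_hom_imageI B1 B2 : fuzzy_ideal mu B1 -> fuzzy_ideal mu B2 ->
  T @` (B1 `&` B2) = T @` B1 `&` T @` B2.
Proof.
move=> idealB1 idealB2; apply/seteqP; split.
  by move=> _ [x [B1x B2x] <-]; split; exists x.
move=> _ [[u1 B1u1 <-] [u2 B2u2 Tu21]].
have [_ has_sup _] := rE.
have [c abs_c] := has_sup u2 (- u2); have [d abs_d] := has_sup u1 (- u1).
have [leTu1Tc leNTu1Tc] := sup2_ub (riesz_hom_abs abs_c).
rewrite Tu21 in leTu1Tc leNTu1Tc.
have [z [Tz leNcz lezc lift_d]] :=
  riesz_hom_lift_interval (abs_ge0 HE abs_c) (fleNl HF leNTu1Tc) leTu1Tc.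
have [leu1d leNu1d] := sup2_ub abs_d.
have [leNdz lezd] := lift_d d (fleNl HE leNu1d) leu1d.
exists z => //; split.
  exact: (ideal_abs_bounded rE idealB1 B1u1 abs_d leNdz lezd).
exact: (ideal_abs_bounded rE idealB2 B2u2 abs_c leNcz lezc).
Qed.

End FuzzyRieszHom.

Theorem theorem2p4 (R : realType) (E F : lmodType R)
  (mu : E -> E -> R) (nu : F -> F -> R) (T : {linear E -> F}) :
  fuzzy_riesz_space mu -> fuzzy_riesz_space nu -> fuzzy_riesz_hom mu nu T ->
  (forall B : set E, fuzzy_ideal mu B -> fuzzy_ideal_in (range T) nu (T @` B)) /\
  (forall B1 B2 : set E, fuzzy_ideal mu B1 -> fuzzy_ideal mu B2 ->
     T @` (B1 `&` B2) = T @` B1 `&` T @` B2).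
Proof.
move=> rE rF hom_T; split.
  exact: (riesz_hom_image_ideal rE rF hom_T).
exact: (riesz_hom_imageI rE rF hom_T).
Qed.
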